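(* Let $\lambda=1$ and let $T_1,T_2,T_3$ be $0$-currents in $\mathbb{R}^d$, each consisting of a single point mass of multiplicity $+1$ (so each has mass $1$ and positive orientation), located at three points whose pairwise distances all exceed $4$. Then the unique minimizer over integral $0$-currents $T$ of $\sum_{i=1}^3\mathbb{F}_1(T-T_i)$ is the zero (empty) $0$-current.
   Context: Integral $0$-currents are finite integer combinations of signed point masses. For a $0$-current $H$, $\mathbb{F}_\lambda(H)=\inf_{S}\operatorname{M}(H-\partial S)+\lambda\operatorname{M}(S)$, the infimum over $1$-currents $S$ in $\mathbb{R}^d$, where $\operatorname{M}$ denotes mass. The minimizer of $T\mapsto\sum_i\mathbb{F}_\lambda(T-T_i)$ over integral currents is called the median of the $T_i$. *)

From HB Require Import structures.
From mathcomp Require Import all_boot all_order all_algebra.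
From mathcomp Require Import all_classical all_reals.
Set Implicit Arguments. Unset Strict Implicit. Unset Printing Implicit Defensive.
Import Order.TTheory GRing.Theory Num.Theory.
Local Open Scope classical_set_scope.
Local Open Scope ring_scope.

Section Currents.
Variables (R : realType) (d : nat).
Notation pt := 'rV[R]_d.

Definition edist (a b : pt) : R :=
  Num.sqrt (\sum_(i < d) (a ord0 i - b ord0 i) ^+ 2).

(* A 0-current with integer multiplicities, given by its multiplicity
   function: the point mass of multiplicity H x at each x. *)
Definition current0 := pt -> int.

Definition integral_current0 (H : current0) : Prop :=
  exists s : seq pt, forall x, H x != 0 -> x \in s.

Definition zero0 : current0 := fun _ => 0.
Definition sub0 (H K : current0) : current0 := fun x => H x - K x.
Definition dirac0 (p : pt) : current0 := fun x => if x == p then 1 else 0.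

Definition mass0 (H : current0) : R :=
  \sum_(x \in [set: pt]) (`|H x|%:~R : R).

(* Integral polyhedral 1-chains: finite lists of oriented segments
   [a,b] (from a to b) with integer multiplicities m. *)
Definition chain1 := seq (pt * pt * int).

Definition bd1 (S : chain1) : current0 :=
  fun x => \sum_(sg <- S) (sg.2 * ((sg.1.2 == x)%:Z - (sg.1.1 == x)%:Z)).

(* mass of the chain as written (>= its true mass; equality for a
   non-overlapping representation, so the infimum below is unaffected) *)
Definition mass1 (S : chain1) : R :=
  \sum_(sg <- S) (`|sg.2|%:~R * edist sg.1.1 sg.1.2).

Definition flat (lambda : R) (H : current0) : R :=
  inf [set r : R | exists S : chain1,
         r = mass0 (sub0 H (bd1 S)) + lambda * mass1 S].

Definition median_obj3 (lambda : R) (T1 T2 T3 T : current0) : R :=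
  flat lambda (sub0 T T1) + flat lambda (sub0 T T2) + flat lambda (sub0 T T3).

End Currents.

From HB Require Import structures.
From mathcomp Require Import all_boot all_order all_algebra.
From mathcomp Require Import all_classical all_reals.
From mathcomp Require Import ring lra.
Import Order.TTheory GRing.Theory Num.Theory.
Local Open Scope ring_scope.

(* Weak duality gives F_1(H) >= sum_x H(x) f(x) for every 1-Lipschitz f with
   |f| <= 1, while F_1(H) <= M(H); so T = 0 has objective at most 3.  For the
   input p_i take the calibration f_i, equal to |x - p_i| - 1 near p_i and to half
   the tent max(0, 1 - |x - p_j|) near another input p_j.  When the inputs are more
   than 4 apart, f_1 + f_2 + f_3 = 0, so every T has objective at least
   3 + <T, f_1 + f_2 + f_3> = 3.  If T(x0) <> 0, then x0 is at distance at least 2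
   from p_1 or from p_2, where the calibration has slack: a narrow cone of height
   eps at x0, pointing in the direction of the sign of T(x0), keeps it admissible
   and raises the pairing by |T(x0)| eps > 0. *)

Lemma sum_mul_sqr_le (R : realDomainType) (I : finType) (u v : I -> R) :
  (\sum_i u i * v i) ^+ 2 <= (\sum_i u i ^+ 2) * (\sum_i v i ^+ 2).
Proof.
have prod_sum (a b : I -> R) : (\sum_i a i) * (\sum_j b j) = \sum_i \sum_j a i * b j.
  by rewrite mulr_suml; apply: eq_bigr => i _; rewrite mulr_sumr.
pose cross i j := u i ^+ 2 * v j ^+ 2 - (u i * v i) * (u j * v j).
have lagrange : \sum_i \sum_j (u i * v j - u j * v i) ^+ 2
    = ((\sum_i u i ^+ 2) * (\sum_i v i ^+ 2) - (\sum_i u i * v i) ^+ 2) *+ 2.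
  have -> : \sum_i \sum_j (u i * v j - u j * v i) ^+ 2
      = \sum_i \sum_j cross i j + \sum_j \sum_i cross i j.
    rewrite -big_split; apply: eq_bigr => i _.
    by rewrite -big_split; apply: eq_bigr => j _; rewrite /cross /=; ring.
  rewrite [X in _ + X]exchange_big mulr2n expr2 !prod_sum -sumrB.
  by congr (_ + _); apply: eq_bigr => i _; rewrite -sumrB.
rewrite -subr_ge0 -(pmulrn_lge0 _ (ltn0Sn 1)) -lagrange.
by apply: sumr_ge0 => i _; apply: sumr_ge0 => j _; apply: sqr_ge0.
Qed.

Lemma sqrt_sum_sqrD (R : rcfType) (I : finType) (u v : I -> R) :
  Num.sqrt (\sum_i (u i + v i) ^+ 2)
    <= Num.sqrt (\sum_i u i ^+ 2) + Num.sqrt (\sum_i v i ^+ 2).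
Proof.
set A := \sum_i u i ^+ 2; set B := \sum_i v i ^+ 2; set C := \sum_i u i * v i.
have A_ge0 : 0 <= A by apply: sumr_ge0 => i _; apply: sqr_ge0.
have B_ge0 : 0 <= B by apply: sumr_ge0 => i _; apply: sqr_ge0.
have cauchy_schwarz : C <= Num.sqrt A * Num.sqrt B.
  rewrite -sqrtrM // (le_trans (ler_norm C)) // -sqrtr_sqr ler_sqrt ?mulr_ge0 //.
  exact: sum_mul_sqr_le.
have -> : \sum_i (u i + v i) ^+ 2 = A + C *+ 2 + B.
  rewrite /A /B /C -sumrMnl -!big_split; apply: eq_bigr => i _ /=; ring.
rewrite -[X in _ <= X]ger0_norm ?addr_ge0 ?sqrtr_ge0 // -sqrtr_sqr.
rewrite ler_sqrt ?sqr_ge0 // sqrrD !sqr_sqrtr //.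
by rewrite lerD2r lerD2l lerMn2r.
Qed.

Section Currents.
Context {R : realType} {d : nat}.
Local Notation pt := 'rV[R]_d.
Local Notation edist := (@edist R d).
Implicit Types (a b c q qj qk x y p : pt) (f g : pt -> R) (k : R).
Implicit Types (H T : current0 R d) (S : chain1 R d) (r : seq pt).

Lemma edist_ge0 a b : 0 <= edist a b.
Proof. exact: sqrtr_ge0. Qed.

Lemma edistC a b : edist a b = edist b a.
Proof. by congr Num.sqrt; apply: eq_bigr => i _; rewrite -sqrrN opprB. Qed.

Lemma edistxx a : edist a a = 0.
Proof. by rewrite /edist big1 ?sqrtr0 // => i _; rewrite subrr expr0n. Qed.

Lemma edist_gt0 {a b} : a != b -> 0 < edist a b.
Proof.
apply: contraNT; rewrite sqrtr_gt0 -leNgt => sum_le0; apply/eqP/matrixP => i j.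
rewrite (ord1 i); apply/eqP; rewrite -subr_eq0 -sqrf_eq0; apply/eqP.
have sum_eq0 : \sum_(k < d) (a ord0 k - b ord0 k) ^+ 2 = 0.
  by apply/eqP; rewrite eq_le sum_le0 sumr_ge0 // => k _; apply: sqr_ge0.
by apply: (psumr_eq0P _ sum_eq0) => // k _; apply: sqr_ge0.
Qed.

Lemma edist_triangle a b c : edist a c <= edist a b + edist b c.
Proof.
rewrite /edist (eq_bigr (fun i => ((a ord0 i - b ord0 i) + (b ord0 i - c ord0 i)) ^+ 2)).
  exact: sqrt_sum_sqrD.
by move=> i _; rewrite subrKA.
Qed.

Definition lipschitz1 f := forall a b, f a - f b <= edist a b.

Lemma lipschitz1_norm f a b : lipschitz1 f -> `|f a - f b| <= edist a b.
Proof. by move=> lf; rewrite ler_norml lf andbT lerNl opprB edistC lf. Qed.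

Lemma lipschitz1_cst k : lipschitz1 (fun _ => k).
Proof. by move=> a b; rewrite subrr edist_ge0. Qed.

Lemma lipschitz1_edist q : lipschitz1 (edist ^~ q).
Proof. by move=> a b; rewrite lerBlDr edist_triangle. Qed.

Lemma lipschitz1_scale k f : `|k| <= 1 -> lipschitz1 f -> lipschitz1 (fun x => k * f x).
Proof.
move=> k_le1 lf a b; rewrite -mulrBr (le_trans (ler_norm _)) // normrM.
by rewrite -[edist a b]mul1r ler_pM ?normr_ge0 ?lipschitz1_norm.
Qed.

Lemma lipschitz1_opp f : lipschitz1 f -> lipschitz1 (fun x => - f x).
Proof. by move=> lf a b; rewrite opprK addrC edistC lf. Qed.

Lemma lipschitz1_addl k f : lipschitz1 f -> lipschitz1 (fun x => k + f x).
Proof. by move=> lf a b; rewrite opprD addrACA subrr add0r lf. Qed.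

Lemma lipschitz1_addr k f : lipschitz1 f -> lipschitz1 (fun x => f x + k).
Proof. by move=> lf a b; rewrite opprD addrACA subrr addr0 lf. Qed.

Lemma lipschitz1_max f g :
  lipschitz1 f -> lipschitz1 g -> lipschitz1 (fun x => Num.max (f x) (g x)).
Proof.
move=> lf lg a b; have := lf a b; have := lg a b.
by case: (lerP (f a) (g a)); case: (lerP (f b) (g b)); lra.
Qed.

Lemma lipschitz1_min f g :
  lipschitz1 f -> lipschitz1 g -> lipschitz1 (fun x => Num.min (f x) (g x)).
Proof.
move=> lf lg a b; have := lf a b; have := lg a b.
by case: (lerP (f a) (g a)); case: (lerP (f b) (g b)); lra.
Qed.

(* For s = 1 (resp. -1), f raised (resp. lowered) by a cone of height eps at x0. *)
Definition peak (s : R) f (x0 : pt) (eps : R) x :=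
  s * Num.max (s * f x) (s * f x0 + eps - edist x x0).

Section Peak.
Variables (s : R) (f : pt -> R) (x0 : pt) (eps : R).
Hypothesis s_sqr : s ^+ 2 = 1.

Let s_norm : `|s| = 1.
Proof. by apply/eqP; rewrite -sqr_norm_eq1 s_sqr. Qed.

Lemma peak_lipschitz1 : lipschitz1 f -> lipschitz1 (peak s f x0 eps).
Proof.
move=> lf; apply: lipschitz1_scale; first by rewrite s_norm.
apply: lipschitz1_max; first by apply: lipschitz1_scale; rewrite ?s_norm.
exact/lipschitz1_addl/lipschitz1_opp/lipschitz1_edist.
Qed.

Lemma peak_center : 0 <= eps -> peak s f x0 eps x0 = f x0 + s * eps.
Proof.
move=> eps_ge0; rewrite /peak edistxx subr0 max_r ?lerDl //.
by rewrite mulrDr mulrA -expr2 s_sqr mul1r.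
Qed.

Lemma peak_eq x : s * f x0 + eps - edist x x0 <= s * f x -> peak s f x0 eps x = f x.
Proof. by move=> le_sf; rewrite /peak max_l // mulrA -expr2 s_sqr mul1r. Qed.

Lemma peak_bounded x :
  (forall y, `|f y| <= 1) -> `|f x0| + eps <= 1 -> `|peak s f x0 eps x| <= 1.
Proof.
move=> f_le1 room; rewrite /peak normrM s_norm mul1r.
have : `|s * f x| <= 1 by rewrite normrM s_norm mul1r.
rewrite ler_norml => /andP[? ?].
have : s * f x0 <= `|f x0| by rewrite (le_trans (ler_norm _)) // normrM s_norm mul1r.
have := edist_ge0 x x0.
by case: (lerP (s * f x)) => ? ? ?; rewrite ler_norml; apply/andP; split; lra.
Qed.

End Peak.

Definition supported H r := forall x, H x != 0 -> x \in r.

Lemma fsumT_seq {g : pt -> R} {r} : uniq r -> (forall x, g x != 0 -> x \in r) ->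
  (\sum_(x \in [set: pt]) g x)%classic = \sum_(x <- r) g x.
Proof.
move=> r_uniq g_supp; rewrite (fsbigE r) //; first by under eq_bigl do rewrite in_setT.
by move=> x _; apply: contraNeq; apply: g_supp.
Qed.

Lemma eq_sum_supported {g : pt -> R} {r1 r2} : uniq r1 -> uniq r2 ->
  (forall x, g x != 0 -> x \in r1) -> (forall x, g x != 0 -> x \in r2) ->
  \sum_(x <- r1) g x = \sum_(x <- r2) g x.
Proof. by move=> u1 u2 s1 s2; rewrite -(fsumT_seq u1 s1) (fsumT_seq u2 s2). Qed.

Lemma mass0E {H r} : uniq r -> supported H r -> mass0 H = \sum_(x <- r) `|H x|%:~R.
Proof.
move=> r_uniq H_supp; rewrite /mass0 (fsumT_seq r_uniq) // => x.
by rewrite intr_eq0 normr_eq0; apply: H_supp.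
Qed.

Lemma mass0_ge0 H : 0 <= mass0 H.
Proof. by apply: fsumr_ge0 => x _; rewrite ler0z normr_ge0. Qed.

Lemma mass1_ge0 S : 0 <= mass1 S.
Proof. by apply: sumr_ge0 => sg _; rewrite mulr_ge0 ?ler0z ?normr_ge0 ?edist_ge0. Qed.

Lemma sum_pred1 f {r p} : uniq r -> p \in r -> \sum_(x <- r) (p == x)%:R * f x = f p.
Proof.
move=> r_uniq pr; rewrite (bigD1_seq p) //= eqxx mul1r big1 ?addr0 // => x.
by rewrite eq_sym => /negbTE ->; rewrite mul0r.
Qed.

Definition chain_pts S := flatten [seq [:: sg.1.1; sg.1.2] | sg <- S].

Lemma chain_pts_ends S sg :
  sg \in S -> (sg.1.1 \in chain_pts S) && (sg.1.2 \in chain_pts S).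
Proof.
by move=> sg_in; apply/andP; split; apply/flatten_mapP; exists sg; rewrite // !inE eqxx ?orbT.
Qed.

Lemma supported_bd1 S : supported (bd1 S) (chain_pts S).
Proof.
move=> x; apply: contraNT => x_notin; rewrite /bd1 big1_seq // => sg /andP[_ /chain_pts_ends].
case/andP=> a_in b_in.
have neq y : y \in chain_pts S -> (y == x) = false.
  by move=> y_in; apply: contraNF x_notin => /eqP <-.
by rewrite !neq // subrr mulr0.
Qed.

Lemma sum_bd1 S f {r} : uniq r -> {subset chain_pts S <= r} ->
  \sum_(x <- r) (bd1 S x)%:~R * f x
    = \sum_(sg <- S) sg.2%:~R * (f sg.1.2 - f sg.1.1).
Proof.
move=> r_uniq; elim: S => [|sg S IH] S_sub.
  by rewrite big_nil big1 // => x _; rewrite /bd1 big_nil mul0r.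
have [a_in b_in S_sub'] : [/\ sg.1.1 \in r, sg.1.2 \in r & {subset chain_pts S <= r}].
  by split=> [||x x_in]; apply: S_sub; rewrite /= !inE ?eqxx ?x_in ?orbT.
rewrite big_cons -IH //.
under eq_bigr => x _ do rewrite /bd1 big_cons -/(bd1 S x) intrD mulrDl.
rewrite big_split /=; congr (_ + _).
rewrite -(sum_pred1 f r_uniq b_in) -(sum_pred1 f r_uniq a_in) -sumrB mulr_sumr.
by apply: eq_bigr => x _; rewrite intrM intrB -!pmulrn; ring.
Qed.

Lemma sum_bd1_le_mass1 S f : lipschitz1 f ->
  \sum_(sg <- S) sg.2%:~R * (f sg.1.2 - f sg.1.1) <= mass1 S.
Proof.
move=> lf; apply: ler_sum => sg _; rewrite (le_trans (ler_norm _)) // normrM intr_norm.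
by rewrite ler_wpM2l ?ler0z ?normr_ge0 // edistC lipschitz1_norm.
Qed.

Lemma sum_le_mass0 H r f : uniq r -> supported H r -> (forall x, `|f x| <= 1) ->
  \sum_(x <- r) (H x)%:~R * f x <= mass0 H.
Proof.
move=> r_uniq H_supp f_le1; rewrite (mass0E r_uniq H_supp); apply: ler_sum => x _.
by rewrite (le_trans (ler_norm _)) // normrM intr_norm ler_piMr ?normr_ge0.
Qed.

Definition flat_test f := lipschitz1 f /\ forall x, `|f x| <= 1.

Lemma sum_le_flat {H r f} : uniq r -> supported H r -> flat_test f ->
  \sum_(x <- r) (H x)%:~R * f x <= flat 1 H.
Proof.
move=> r_uniq H_supp [lf f_le1]; apply: lb_le_inf.
  by exists (mass0 (sub0 H (bd1 [::])) + 1 * mass1 (@nil (pt * pt * int))), [::].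
move=> _ [S ->]; rewrite mul1r.
pose r' := undup (r ++ chain_pts S).
have r'_uniq : uniq r' := undup_uniq _.
have r_sub : {subset r <= r'} by move=> x x_in; rewrite mem_undup mem_cat x_in.
have S_sub : {subset chain_pts S <= r'} by move=> x x_in; rewrite mem_undup mem_cat x_in orbT.
have diff_supp : supported (sub0 H (bd1 S)) r'.
  move=> x; rewrite /sub0; case: (eqVneq (H x) 0) => [->|/H_supp/r_sub //].
  by rewrite sub0r oppr_eq0 => /supported_bd1/S_sub.
rewrite (eq_sum_supported r_uniq r'_uniq); first last.
- by move=> x; rewrite mulf_eq0 negb_or intr_eq0 => /andP[/H_supp/r_sub].
- by move=> x; rewrite mulf_eq0 negb_or intr_eq0 => /andP[/H_supp].
have split_H x : (H x)%:~R * f x = (sub0 H (bd1 S) x)%:~R * f x + (bd1 S x)%:~R * f x.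
  by rewrite /sub0 intrB; ring.
rewrite (eq_bigr _ (fun x _ => split_H x)) big_split /= (sum_bd1 S f r'_uniq S_sub).
by rewrite lerD ?sum_le_mass0 ?sum_bd1_le_mass1.
Qed.

Lemma flat_le_mass0 H : flat 1 H <= mass0 H.
Proof.
have -> : mass0 H = mass0 (sub0 H (bd1 [::])) + 1 * mass1 (@nil (pt * pt * int)).
  rewrite /mass1 big_nil mulr0 addr0; congr mass0.
  by apply: boolp.funext => x; rewrite /sub0 /bd1 big_nil subr0.
apply: ge_inf; last by exists [::].
by exists 0 => _ [S ->]; rewrite addr_ge0 ?mul1r ?mass0_ge0 ?mass1_ge0.
Qed.

Lemma flat_sub_dirac_ge {T r p f} : uniq r -> supported T r -> p \in r ->
  flat_test f -> f p = -1 -> 1 + \sum_(x <- r) (T x)%:~R * f x <= flat 1 (sub0 T (dirac0 p)).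
Proof.
move=> r_uniq T_supp pr f_test fp.
have supp : supported (sub0 T (dirac0 p)) r.
  move=> x; rewrite /sub0 /dirac0; case: (x =P p) => [->|_] //.
  by rewrite subr0 => /T_supp.
apply: le_trans (sum_le_flat r_uniq supp f_test); rewrite addrC.
rewrite [X in _ <= X](eq_bigr (fun x => (T x)%:~R * f x - (p == x)%:R * f x)).
  by rewrite sumrB sum_pred1 // fp opprK.
by move=> x _; rewrite /sub0 /dirac0 eq_sym intrB mulrBl; case: (p == x).
Qed.

Lemma median_obj3_ge {T r p1 p2 p3 f1 f2 f3} :
  uniq r -> supported T r -> p1 \in r -> p2 \in r -> p3 \in r ->
  flat_test f1 -> flat_test f2 -> flat_test f3 -> f1 p1 = -1 -> f2 p2 = -1 -> f3 p3 = -1 ->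
  3 + \sum_(x <- r) (T x)%:~R * (f1 x + f2 x + f3 x)
    <= median_obj3 1 (dirac0 p1) (dirac0 p2) (dirac0 p3) T.
Proof.
move=> r_uniq T_supp p1r p2r p3r f1_test f2_test f3_test f1p f2p f3p.
have := flat_sub_dirac_ge r_uniq T_supp p1r f1_test f1p.
have := flat_sub_dirac_ge r_uniq T_supp p2r f2_test f2p.
have := flat_sub_dirac_ge r_uniq T_supp p3r f3_test f3p.
have -> : \sum_(x <- r) (T x)%:~R * (f1 x + f2 x + f3 x) = \sum_(x <- r) (T x)%:~R * f1 x
    + \sum_(x <- r) (T x)%:~R * f2 x + \sum_(x <- r) (T x)%:~R * f3 x.
  by rewrite -!big_split; apply: eq_bigr => x _ /=; ring.
rewrite /median_obj3; lra.
Qed.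

Lemma mass0_zero_sub_dirac p : mass0 (sub0 (@zero0 R d) (dirac0 p)) = 1.
Proof.
rewrite (@mass0E _ [:: p]) // ?big_seq1 /sub0 /zero0 /dirac0 ?eqxx ?sub0r ?normrN //.
by move=> x; case: (x =P p) => [->|]; rewrite ?mem_seq1 ?eqxx ?subrr.
Qed.

Lemma median_obj3_zero_le p1 p2 p3 :
  median_obj3 1 (dirac0 p1) (dirac0 p2) (dirac0 p3) (@zero0 R d) <= 3.
Proof.
have := flat_le_mass0 (sub0 (@zero0 R d) (dirac0 p1)).
have := flat_le_mass0 (sub0 (@zero0 R d) (dirac0 p2)).
have := flat_le_mass0 (sub0 (@zero0 R d) (dirac0 p3)).
rewrite !mass0_zero_sub_dirac /median_obj3; lra.
Qed.

Lemma median_obj3C lambda (T1 T2 T3 T : current0 R d) :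
  median_obj3 lambda T1 T2 T3 T = median_obj3 lambda T2 T1 T3 T.
Proof. by rewrite /median_obj3 [flat _ _ + flat _ _]addrC. Qed.

Definition tent q x : R := Num.max 0 (1 - edist x q).

Definition calibration q qj qk x : R :=
  Num.min (2^-1 * Num.max (tent qj x) (tent qk x)) (edist x q - 1).

Lemma tent_lipschitz1 q : lipschitz1 (tent q).
Proof. exact/lipschitz1_max/lipschitz1_addl/lipschitz1_opp/lipschitz1_edist/lipschitz1_cst. Qed.

Lemma max_tent_ge0 qj qk x : 0 <= Num.max (tent qj x) (tent qk x).
Proof. by rewrite le_max /tent le_max lexx. Qed.

Lemma max_tent_le1 qj qk x : Num.max (tent qj x) (tent qk x) <= 1.
Proof. by rewrite ge_max /tent !ge_max ler01 !gerDl !oppr_le0 !edist_ge0. Qed.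

Lemma max_tent_far qj qk x :
  1 <= edist x qj -> 1 <= edist x qk -> Num.max (tent qj x) (tent qk x) = 0.
Proof. by move=> fj fk; rewrite /tent !max_l ?subr_le0. Qed.

Lemma max_tent_near qj qk x : edist x qj <= 1 -> 1 <= edist x qk ->
  Num.max (tent qj x) (tent qk x) = 1 - edist x qj.
Proof.
move=> nj fk.
have -> : tent qk x = 0 by rewrite /tent max_l // subr_le0.
have -> : tent qj x = 1 - edist x qj by rewrite /tent max_r // subr_ge0.
by rewrite max_l // subr_ge0.
Qed.

Lemma calibration_lipschitz1 q qj qk : lipschitz1 (calibration q qj qk).
Proof.
apply: lipschitz1_min; last exact/lipschitz1_addr/lipschitz1_edist.
apply: lipschitz1_scale; first by rewrite ger0_norm; lra.
exact/lipschitz1_max/tent_lipschitz1/tent_lipschitz1.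
Qed.

Lemma calibration_center q qj qk : calibration q qj qk q = -1.
Proof.
by rewrite /calibration edistxx sub0r min_r //; have := max_tent_ge0 qj qk q; lra.
Qed.

Lemma calibration_le_half q qj qk x : calibration q qj qk x <= 2^-1.
Proof. by rewrite ge_min; apply/orP; left; have := max_tent_le1 qj qk x; lra. Qed.

Lemma calibration_flat_test q qj qk : flat_test (calibration q qj qk).
Proof.
split=> [|x]; first exact: calibration_lipschitz1.
have := max_tent_ge0 qj qk x; have := edist_ge0 x q; have := calibration_le_half q qj qk x.
rewrite /calibration ler_norml; case: (lerP (2^-1 * _) _) => ? ? ? ?; apply/andP; split; lra.
Qed.

Lemma calibration_off q qj qk x : 3 / 2 <= edist x q ->
  calibration q qj qk x = 2^-1 * Num.max (tent qj x) (tent qk x).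
Proof. by move=> fq; rewrite /calibration min_l //; have := max_tent_le1 qj qk x; lra. Qed.

Lemma calibration_near q qj qk x : edist x q <= 1 -> 1 <= edist x qj -> 1 <= edist x qk ->
  calibration q qj qk x = edist x q - 1.
Proof. by move=> nq fj fk; rewrite /calibration max_tent_far // mulr0 min_r // subr_le0. Qed.

Lemma calibration_far q qj qk x : 1 <= edist x q -> 1 <= edist x qj -> 1 <= edist x qk ->
  calibration q qj qk x = 0.
Proof. by move=> fq fj fk; rewrite /calibration max_tent_far // mulr0 min_l // subr_ge0. Qed.

Lemma calibration_sum0 {p1 p2 p3} x :
  4 < edist p1 p2 -> 4 < edist p1 p3 -> 4 < edist p2 p3 ->
  calibration p1 p2 p3 x + calibration p2 p1 p3 x + calibration p3 p1 p2 x = 0.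
Proof.
move=> d12 d13 d23.
have far a b : 4 < edist a b -> edist x a <= 1 -> 3 / 2 <= edist x b.
  by move=> dab nxa; have := edist_triangle a x b; rewrite (edistC a x); lra.
have farC a b : 4 < edist b a -> edist x a <= 1 -> 3 / 2 <= edist x b.
  by rewrite edistC; apply: far.
case: (lerP (edist x p1) 1) => [n1|/ltW f1].
  have [f2 f3] := (far _ _ d12 n1, far _ _ d13 n1).
  have [g2 g3] : 1 <= edist x p2 /\ 1 <= edist x p3 by split; lra.
  by rewrite (calibration_near p1) // !calibration_off // !max_tent_near //; lra.
case: (lerP (edist x p2) 1) => [n2|/ltW f2].
  have [f3 g3] : 3 / 2 <= edist x p3 /\ 1 <= edist x p3 by have := far _ _ d23 n2; lra.
  have f1' : 3 / 2 <= edist x p1 := farC _ _ d12 n2.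
  rewrite (calibration_near p2) // !calibration_off // (maxC (tent p1 x)).
  by rewrite !max_tent_near //; lra.
case: (lerP (edist x p3) 1) => [n3|/ltW f3].
  have f1' : 3 / 2 <= edist x p1 := farC _ _ d13 n3.
  have f2' : 3 / 2 <= edist x p2 := farC _ _ d23 n3.
  rewrite (calibration_near p3) // !calibration_off // (maxC (tent p2 x)) (maxC (tent p1 x)).
  by rewrite !max_tent_near //; lra.
by rewrite !calibration_far ?addr0.
Qed.

Lemma calibration_slack qj qk {q x0 y} {eps : R} :
  2 <= edist x0 q -> 0 <= eps -> eps <= 2^-1 -> eps <= 2^-1 * edist y x0 ->
  `|calibration q qj qk y - calibration q qj qk x0| <= edist y x0 - eps.
Proof.
move=> fq eps_ge0 eps_le eps_small.
rewrite (calibration_off q qj qk x0); last lra.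
have := max_tent_le1 qj qk x0; have := max_tent_ge0 qj qk x0.
have := lipschitz1_max _ _ (tent_lipschitz1 qj) (tent_lipschitz1 qk).
move=> /(lipschitz1_norm _ y x0); rewrite ler_norml => /andP[? ?] ? ?.
have := edist_triangle x0 y q; rewrite [edist x0 y]edistC => ?.
rewrite /calibration ler_norml.
by case: (lerP (2^-1 * _) _) => ?; apply/andP; split; lra.
Qed.

Lemma exists_sep_radius (x0 : pt) r : exists2 eps : R, 0 < eps <= 2^-1 &
  forall y, y \in r -> y != x0 -> eps <= 2^-1 * edist y x0.
Proof.
elim: r => [|y r [eps /andP[eps_gt0 eps_le] eps_sep]].
  by exists 2^-1 => //; apply/andP; split; lra.
have [->|y_neq] := eqVneq y x0.
  exists eps => [|z]; first by rewrite eps_gt0 eps_le.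
  by rewrite inE => /predU1P[->|/eps_sep]; rewrite ?eqxx.
exists (Num.min eps (2^-1 * edist y x0)) => [|z].
  have := edist_gt0 y_neq; rewrite lt_min ge_min eps_gt0 eps_le /=; lra.
by rewrite inE ge_min => /predU1P[->|/eps_sep sep /sep ->] //; rewrite lexx orbT.
Qed.

Lemma peak_calibration qj qk {q x0} {s eps : R} {r} :
  2 <= edist x0 q -> s ^+ 2 = 1 -> 0 < eps -> eps <= 2^-1 ->
  (forall y, y \in r -> y != x0 -> eps <= 2^-1 * edist y x0) ->
  let f := peak s (calibration q qj qk) x0 eps in
  [/\ flat_test f, f q = -1 & {in r, forall y, y != x0 -> f y = calibration q qj qk y}].
Proof.
move=> x0_far s_sqr eps_gt0 eps_le eps_sep f.
have s_norm : `|s| = 1 by apply/eqP; rewrite -sqr_norm_eq1 s_sqr.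
have psi_x0_ge0 : 0 <= calibration q qj qk x0.
  rewrite calibration_off; last lra.
  by rewrite mulr_ge0 ?max_tent_ge0 // invr_ge0.
have psi_x0_le := calibration_le_half q qj qk x0.
have s_psi_x0 : `|s * calibration q qj qk x0| <= 2^-1.
  by rewrite normrM s_norm mul1r ger0_norm.
have [psi_lip psi_le1] := calibration_flat_test q qj qk.
split=> [|| y y_in y_neq].
- split=> [|x]; first exact: peak_lipschitz1.
  by apply: peak_bounded => //; rewrite ger0_norm //; lra.
- rewrite /f peak_eq ?calibration_center //.
  have := ler_norm (s * calibration q qj qk x0); have := ler_norm s.
  by rewrite s_norm edistC; lra.
- rewrite /f peak_eq //.
  have := calibration_slack qj qk x0_far (ltW eps_gt0) eps_le (eps_sep y y_in y_neq).
  have := ler_norm (s * (calibration q qj qk x0 - calibration q qj qk y)).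
  by rewrite normrM s_norm mul1r distrC mulrBr; lra.
Qed.

Lemma integral_current0_supported {T} (ps : seq pt) : integral_current0 T ->
  exists r, [/\ uniq r, supported T r & {subset ps <= r}].
Proof.
case=> s T_supp; exists (undup (s ++ ps)); split=> [|x|x x_in]; first exact: undup_uniq.
  by move/T_supp => x_in; rewrite mem_undup mem_cat x_in.
by rewrite mem_undup mem_cat x_in orbT.
Qed.

Lemma median_obj3_gt3_at {p1 p2 p3 T r x0} :
  4 < edist p1 p2 -> 4 < edist p1 p3 -> 4 < edist p2 p3 -> uniq r -> supported T r ->
  p1 \in r -> p2 \in r -> p3 \in r -> T x0 != 0 -> 2 <= edist x0 p1 ->
  3 < median_obj3 1 (dirac0 p1) (dirac0 p2) (dirac0 p3) T.
Proof.
move=> d12 d13 d23 r_uniq T_supp p1r p2r p3r Tx0 x0_far.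
pose t : R := (T x0)%:~R.
have s_sqr : Num.sg t ^+ 2 = 1 by rewrite sqr_sg intr_eq0 Tx0.
have [eps /andP[eps_gt0 eps_le] eps_sep] := exists_sep_radius x0 r.
have [f1_test f1_p1 f1_eq] := peak_calibration p2 p3 x0_far s_sqr eps_gt0 eps_le eps_sep.
have := median_obj3_ge r_uniq T_supp p1r p2r p3r f1_test
  (calibration_flat_test p2 p1 p3) (calibration_flat_test p3 p1 p2) f1_p1
  (calibration_center _ _ _) (calibration_center _ _ _).
rewrite (bigD1_seq x0) ?(T_supp _ Tx0) //= big1_seq => [|y /andP[y_neq y_in]]; last first.
  by rewrite f1_eq // calibration_sum0 ?mulr0.
rewrite addr0 peak_center ?(ltW eps_gt0) //.
(* Only the term at x0 survives, and it equals t * (sg t * eps) = |t| * eps. *)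
have := calibration_sum0 x0 d12 d13 d23.
have : 0 < `|t| * eps by rewrite mulr_gt0 ?normr_gt0 ?intr_eq0.
rewrite normrEsg -/t; nra.
Qed.

Section MedianOfThreePoints.
Context {p1 p2 p3 : pt}.
Hypotheses (d12 : 4 < edist p1 p2) (d13 : 4 < edist p1 p3) (d23 : 4 < edist p2 p3).

Local Notation obj := (median_obj3 1 (dirac0 p1) (dirac0 p2) (dirac0 p3)).

Let supported_with_inputs T : integral_current0 T ->
  exists r, [/\ uniq r, supported T r, p1 \in r, p2 \in r & p3 \in r].
Proof.
case/(integral_current0_supported [:: p1; p2; p3]) => r [r_uniq T_supp ps_sub].
by exists r; split=> //; apply: ps_sub; rewrite !inE eqxx ?orbT.
Qed.

Lemma median_obj3_ge3 {T} : integral_current0 T -> 3 <= obj T.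
Proof.
case/supported_with_inputs => r [r_uniq T_supp p1r p2r p3r].
have := median_obj3_ge r_uniq T_supp p1r p2r p3r
  (calibration_flat_test p1 p2 p3) (calibration_flat_test p2 p1 p3)
  (calibration_flat_test p3 p1 p2) (calibration_center _ _ _) (calibration_center _ _ _)
  (calibration_center _ _ _).
by rewrite big1 ?addr0 // => x _; rewrite calibration_sum0 ?mulr0.
Qed.

Lemma median_obj3_gt3 {T x0} : integral_current0 T -> T x0 != 0 -> 3 < obj T.
Proof.
case/supported_with_inputs => r [r_uniq T_supp p1r p2r p3r] Tx0.
have [x0_far|x0_near] := lerP 2 (edist x0 p1).
  exact: (median_obj3_gt3_at d12 d13 d23 r_uniq T_supp p1r p2r p3r Tx0 x0_far).
rewrite median_obj3C; apply: (median_obj3_gt3_at _ d23 d13 r_uniq T_supp p2r p1r p3r Tx0).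
  by rewrite edistC.
by move: d12; have := edist_triangle p1 x0 p2; rewrite (edistC p1 x0); lra.
Qed.

End MedianOfThreePoints.

End Currents.

Theorem mainTheorem2 (R : realType) (d : nat) (p1 p2 p3 : 'rV[R]_d) :
  4 < edist p1 p2 -> 4 < edist p1 p3 -> 4 < edist p2 p3 ->
  (forall T : current0 R d, integral_current0 T ->
     median_obj3 1 (dirac0 p1) (dirac0 p2) (dirac0 p3) (@zero0 R d)
     <= median_obj3 1 (dirac0 p1) (dirac0 p2) (dirac0 p3) T) /\
  (forall T : current0 R d, integral_current0 T ->
     median_obj3 1 (dirac0 p1) (dirac0 p2) (dirac0 p3) T
     = median_obj3 1 (dirac0 p1) (dirac0 p2) (dirac0 p3) (@zero0 R d) ->
     T = @zero0 R d).
Proof.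
move=> d12 d13 d23; have obj0_le3 := median_obj3_zero_le p1 p2 p3.
split=> [T T_int | T T_int obj_eq].
  exact: le_trans obj0_le3 (median_obj3_ge3 d12 d13 d23 T_int).
apply: boolp.funext => x; apply/eqP/negPn/negP => Tx.
by have := median_obj3_gt3 d12 d13 d23 T_int Tx; rewrite obj_eq ltNge obj0_le3.
Qed.
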